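(* For every instance of (edge-weighted) online stochastic matching in the Poisson arrival model and every level $\ell\ge0$, the expected weight of a maximum-weight matching of the realized bipartite graph is at most the optimal value of the $\ell$-th level Poisson Matching LP.
   Context: Poisson arrival model: $I$ is a finite set of online types and $J$ a finite set of offline vertices, with edges $E\subseteq I\times J$ and weights $w_{ij}>0$. Type $i$ arrives by an independent Poisson process of rate $\lambda_i>0$ on $[0,1]$, and $\lambda_S=\sum_{i\in S}\lambda_i$. $P_k(\lambda)=e^{-\lambda}\sum_{m=0}^k\lambda^m/m!$ is the Poisson CDF. For $\ell\ge1$, the $\ell$-th level Poisson Matching LP is: maximize $\sum_{(i,j)\in E}w_{ij}x_{ij}$ subject to - $x_{ij}\ge0$; - $\sum_{j}x_{ij}\le\lambda_i$ for all $i\in I$; - for every $1\le m\le\ell$, every $S\subseteq I$ and every $T\subseteq J$ with $|T|=m$: $\sum_{i\in S}\sum_{j\in T}x_{ij}\le\sum_{k=1}^m(1-P_{k-1}(\lambda_S))$. Here $x_{ij}=0$ for non-edges. The $0$-th level is the matching LP: maximize $\sum w_{ij}x_{ij}$ subject to $\sum_jx_{ij}\le\lambda_i$, $\sum_ix_{ij}\le1$, and $x\ge0$. *)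

From HB Require Import structures.
From mathcomp Require Import all_boot all_order all_algebra.
From mathcomp Require Import all_classical all_reals.
From mathcomp Require Import all_analysis.
Set Implicit Arguments. Unset Strict Implicit. Unset Printing Implicit Defensive.
Import Order.TTheory GRing.Theory Num.Theory.
Local Open Scope classical_set_scope.
Local Open Scope ring_scope.

Section PoissonMatching.
Variables (R : realType) (I J : finType).

Definition poisson_cdf (k : nat) (lam : R) : R :=
  expR (- lam) * \sum_(m < k.+1) lam ^+ m / (m`!)%:R.

Definition lamS (lam : I -> R) (S : {set I}) : R := \sum_(i in S) lam i.

(** Feasibility for the l-th level Poisson Matching LP (l >= 1),
    and for the matching LP when l = 0.  Non-edges are forced to 0. *)
Definition PML_feasible (E : I -> J -> bool) (lam : I -> R) (l : nat)
    (x : I -> J -> R) : Prop :=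
  (forall i j, 0 <= x i j) /\
  (forall i j, ~~ E i j -> x i j = 0) /\
  (forall i, \sum_(j : J) x i j <= lam i) /\
  (if l == 0%N then forall j, \sum_(i : I) x i j <= 1
   else forall (m : nat) (S : {set I}) (T : {set J}),
     (1 <= m <= l)%N -> #|T| = m ->
     \sum_(i in S) \sum_(j in T) x i j
       <= \sum_(k < m) (1 - poisson_cdf k (lamS lam S))).

Definition PML_value (E : I -> J -> bool) (w : I -> J -> R) (lam : I -> R)
    (l : nat) : \bar R :=
  ereal_sup [set (\sum_(i : I) \sum_(j : J) w i j * x i j)%:E
            | x in PML_feasible E lam l].

(** Realized graph for arrival counts n : online vertices are pairs
    (i, k) with k < n i (the k-th arriving copy of type i). *)
Definition online_vertex (n : {ffun I -> nat}) := {i : I & 'I_(n i)}.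

Definition is_matching (E : I -> J -> bool) (n : {ffun I -> nat})
    (M : {ffun online_vertex n -> option J}) : bool :=
  [forall v, if M v is Some j then E (tag v) j else true] &&
  [forall v, forall v', [forall j, (M v == Some j) && (M v' == Some j) ==> (v == v')]].

Definition matching_weight (w : I -> J -> R) (n : {ffun I -> nat})
    (M : {ffun online_vertex n -> option J}) : R :=
  \sum_(v : online_vertex n) (if M v is Some j then w (tag v) j else 0).

Definition opt_matching (E : I -> J -> bool) (w : I -> J -> R)
    (n : {ffun I -> nat}) : R :=
  \big[Num.max/0]_(M : {ffun online_vertex n -> option J} | is_matching E M)
     matching_weight w M.

(** Expected optimum: counts N_i ~ Poisson(lam_i) independent over i
    (arrival times are irrelevant to the offline optimum). *)
Definition expected_opt (E : I -> J -> bool) (w : I -> J -> R)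
    (lam : I -> R) : \bar R :=
  \esum_(n in [set: {ffun I -> nat}])
     ((\prod_(i : I) poisson_pmf (lam i) (n i)) * opt_matching E w n)%:E.

End PoissonMatching.

From HB Require Import structures.
From mathcomp Require Import all_boot all_order all_algebra.
From mathcomp Require Import all_classical all_reals.
From mathcomp Require Import all_analysis.
From mathcomp Require Import ring zify.
Import Order.TTheory GRing.Theory Num.Theory.
Local Open Scope ring_scope.
Set Implicit Arguments. Unset Strict Implicit.

(* A finite family of arrival-count vectors lies in a box of counts below K.
   For every count vector in the box fix a maximum-weight matching and let
   x_ij be the expected number of type-i arrivals it matches to j, restricted
   to the box.  The objective value of x is the truncated expected optimum, so
   it suffices that x is feasible.  Each constraint is the expectation of a
   pointwise bound on matchings: arrivals of types in S are matched into T at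
   most min(N_S, |T|) times, N_S being their number.  On the box, N_S is a sum
   of independent truncated Poisson counts, so its generating polynomial is
   dominated coefficientwise by that of Poisson(lambda_S); hence
   E[min(N_S, m)] <= sum_(k<m) P(N_S > k) <= sum_(k<m) (1 - P_k(lambda_S)),
   and likewise E[N_S] <= lambda_S. *)

Lemma exp_partial_sum_le (R : realType) (x : R) (M : nat) : 0 <= x ->
  \sum_(s < M) x ^+ s / (s`!)%:R <= expR x.
Proof.
move=> x0; have -> : \sum_(s < M) x ^+ s / (s`!)%:R = series (exp_coeff x) M.
  by rewrite /series /= big_mkord.
apply: nondecreasing_cvgn_le; last exact: is_cvg_series_exp_coeff.
apply: (@nondecreasing_series R (exp_coeff x) xpredT 0) => n _ _.
exact: exp_coeff_ge0.
Qed.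

Lemma natr_minn_sum (R : pzSemiRingType) (s m : nat) :
  (minn s m)%:R = \sum_(k < m) (k < s)%N%:R :> R.
Proof.
elim: m => [|m IH]; first by rewrite big_ord0 minn0.
by rewrite big_ord_recr /= -IH -natrD; congr (_%:R); rewrite !minnE; lia.
Qed.

Lemma big_indicator_eq (R : pzSemiRingType) (T : finType) (P : pred T)
    (f : T -> R) (x : T) :
  \sum_(i | P i) (x == i)%:R * f i = (P x)%:R * f x.
Proof.
case: (boolP (P x)) => hx.
  rewrite (bigD1 x) //= eqxx mul1r big1 ?addr0 ?mul1r // => i /andP[_ hi].
  by rewrite eq_sym (negbTE hi) mul0r.
rewrite mul0r big1 // => i hi; case: eqP => [e|_]; last by rewrite mul0r.
by move: hx; rewrite e hi.
Qed.

Section PoissonWeight.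
Variable R : realType.
Implicit Types (r : R) (k M : nat).

(* Equal to [poisson_pmf r k] for [r > 0]; unlike [poisson_pmf], which
   returns 1 when [r <= 0], it is the point mass at 0 for [r = 0]. *)
Definition poisson_weight r k : R := r ^+ k / (k`!)%:R * expR (- r).

Lemma poisson_weight_ge0 r k : 0 <= r -> 0 <= poisson_weight r k.
Proof. by move=> r0; rewrite !mulr_ge0 ?invr_ge0 ?exprn_ge0 ?expR_ge0. Qed.

Lemma poisson_weight0 k : poisson_weight 0 k = (k == 0)%:R.
Proof.
rewrite /poisson_weight oppr0 expR0 mulr1 expr0n.
by case: k => [|k] /=; rewrite ?mul0r // invr1 mulr1.
Qed.

Lemma poisson_pmfE r k : 0 < r -> poisson_pmf r k = poisson_weight r k.
Proof. by move=> r0; rewrite /poisson_pmf r0. Qed.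

Lemma poisson_weightD a b s :
  poisson_weight (a + b) s =
  \sum_(j < s.+1) poisson_weight a j * poisson_weight b (s - j).
Proof.
rewrite /poisson_weight [a + b]addrC exprDn !mulr_suml.
apply: eq_bigr => j _; have le_js : (j <= s)%N by rewrite -ltnS.
rewrite -mulr_natr opprD expRD.
have fact_neq0 t : (t`!)%:R != 0 :> R by rewrite pnatr_eq0 -lt0n fact_gt0.
have bin_neq0 : ('C(s, j))%:R != 0 :> R by rewrite pnatr_eq0 -lt0n bin_gt0.
rewrite -(bin_fact le_js) mulnA !natrM.
by field; rewrite bin_neq0 !fact_neq0.
Qed.

Lemma poisson_weight_partial_sum_le1 r M : 0 <= r ->
  \sum_(s < M) poisson_weight r s <= 1.
Proof.
move=> r0; rewrite /poisson_weight -mulr_suml -[X in _ <= X](expRxMexpNx_1 r).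
by apply: ler_wpM2r; [exact: expR_ge0 | exact: exp_partial_sum_le].
Qed.

Lemma poisson_weight_partial_mean_le r M : 0 <= r ->
  \sum_(s < M) s%:R * poisson_weight r s <= r.
Proof.
move=> r0; case: M => [|M]; first by rewrite big_ord0.
rewrite big_ord_recl /= mul0r add0r.
have -> : \sum_(i < M) (bump 0 i)%:R * poisson_weight r (bump 0 i) =
          r * \sum_(i < M) poisson_weight r i.
  rewrite mulr_sumr; apply: eq_bigr => i _.
  rewrite /bump /= add1n /poisson_weight factS natrM exprS.
  have fact_neq0 : (i`!)%:R != 0 :> R by rewrite pnatr_eq0 -lt0n fact_gt0.
  have succ_neq0 : (i.+1)%:R != 0 :> R by rewrite pnatr_eq0.
  by field; rewrite fact_neq0 addrC natr1 succ_neq0.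
exact/ler_piMr/poisson_weight_partial_sum_le1.
Qed.

Lemma poisson_cdfE k r : poisson_cdf k r = \sum_(s < k.+1) poisson_weight r s.
Proof.
by rewrite /poisson_cdf mulr_sumr; apply: eq_bigr => s _; rewrite mulrC.
Qed.

Lemma poisson_weight_partial_tail_le r k M : 0 <= r ->
  \sum_(s < M) (k < s)%N%:R * poisson_weight r s <= 1 - poisson_cdf k r.
Proof.
move=> r0; rewrite poisson_cdfE lerBrDr.
apply: le_trans (poisson_weight_partial_sum_le1 (maxn M k.+1) r0).
rewrite (big_ord_widen _ (poisson_weight r) (leq_maxr M k.+1)).
rewrite (big_ord_widen _ (fun s => (k < s)%N%:R * poisson_weight r s)
                       (leq_maxl M k.+1)).
rewrite [X in X + _]big_mkcond [X in _ + X]big_mkcond -big_split /=.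
apply: ler_sum => s _.
rewrite ltnS; case: (s < M)%N; case: leqP => _;
  by rewrite ?mul1r ?mul0r ?add0r ?addr0 ?poisson_weight_ge0.
Qed.

End PoissonWeight.

Section PoissonDomination.
Variable R : realType.

Definition poisson_dominated (A : {poly R}) (r : R) :=
  forall s, 0 <= A`_s /\ A`_s <= poisson_weight r s.

Lemma poisson_dominated1 : poisson_dominated 1 0.
Proof. by move=> s; rewrite coef1 poisson_weight0; split. Qed.

Lemma poisson_dominatedM A B a b : 0 <= a -> 0 <= b ->
  poisson_dominated A a -> poisson_dominated B b ->
  poisson_dominated (A * B) (a + b).
Proof.
move=> a0 b0 domA domB s; rewrite coefM poisson_weightD; split.
  apply: sumr_ge0 => j _.
  by have [? _] := domA j; have [? _] := domB (s - j)%N; apply: mulr_ge0.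
apply: ler_sum => j _.
by have [? ?] := domA j; have [? ?] := domB (s - j)%N; apply: ler_pM.
Qed.

Lemma poisson_dominated_prod (I : Type) (rs : seq I) (P : pred I)
    (A : I -> {poly R}) (r : I -> R) :
  (forall i, P i -> 0 <= r i /\ poisson_dominated (A i) (r i)) ->
  poisson_dominated (\prod_(i <- rs | P i) A i) (\sum_(i <- rs | P i) r i).
Proof.
move=> domA; suff [] : 0 <= \sum_(i <- rs | P i) r i /\
    poisson_dominated (\prod_(i <- rs | P i) A i) (\sum_(i <- rs | P i) r i) by [].
apply: (big_rec2 (fun r A => 0 <= r /\ poisson_dominated A r)).
  by split => //; apply: poisson_dominated1.
move=> i a B /domA[ri0 domAi] [a0 domB].
by split; [apply: addr_ge0 | apply: poisson_dominatedM].
Qed.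

(* Generating polynomial of a Poisson(r) count truncated to [0, K); when [b]
   is false the count is not recorded and only its total mass remains. *)
Definition trunc_poisson_genpoly (K : nat) (r : R) (b : bool) : {poly R} :=
  \sum_(c < K) poisson_pmf r c *: 'X^(if b then c : nat else 0%N).

Lemma trunc_poisson_genpoly_dominated K r b : 0 < r ->
  poisson_dominated (trunc_poisson_genpoly K r b) (if b then r else 0).
Proof.
move=> r0 t; rewrite coef_sum; split.
  by apply: sumr_ge0 => c _; rewrite coefZ coefXn mulr_ge0 ?poisson_pmf_ge0.
case: b.
  under eq_bigr do rewrite coefZ coefXn poisson_pmfE //.
  case: (ltnP t K) => [ltK|geK].
    rewrite (bigD1 (Ordinal ltK)) //= eqxx mulr1 big1 ?addr0 // => c neq_c.
    case: eqP => [eq_tc|]; last by rewrite mulr0.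
    by case/eqP: neq_c; apply: val_inj; rewrite /= eq_tc.
  rewrite big1 ?poisson_weight_ge0 ?ltW // => c _.
  by rewrite gtn_eqF ?mulr0 // (leq_trans (ltn_ord c) geK).
under eq_bigr do rewrite coefZ coefXn eq_sym.
rewrite -mulr_suml poisson_weight0 mulrC eq_sym.
case: (t == 0%N); rewrite ?mul0r // mul1r.
under eq_bigr do rewrite poisson_pmfE //.
exact/poisson_weight_partial_sum_le1/ltW.
Qed.

End PoissonDomination.

Section TruncatedArrivals.
Variables (R : realType) (I : finType) (lam : I -> R) (K : nat).
Hypothesis lam_gt0 : forall i, 0 < lam i.

Definition box_prob (g : {ffun I -> 'I_K}) : R :=
  \prod_i poisson_pmf (lam i) (g i).

Definition box_count (S : {set I}) (g : {ffun I -> 'I_K}) : nat :=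
  \sum_(i in S) g i.

Lemma box_prob_ge0 g : 0 <= box_prob g.
Proof. by apply: prodr_ge0 => i _; apply: poisson_pmf_ge0. Qed.

Lemma lamS_ge0 S : 0 <= lamS lam S.
Proof. by apply: sumr_ge0 => i _; apply: ltW. Qed.

Lemma box_count_lt S g : (box_count S g < (#|I| * K).+1)%N.
Proof.
rewrite ltnS -sum_nat_const /box_count big_mkcond /=; apply: leq_sum => i _.
by case: (i \in S) => //; apply: ltnW.
Qed.

Lemma box_count_genpolyE S :
  \sum_(g : {ffun I -> 'I_K}) box_prob g *: 'X^(box_count S g) =
  \prod_i trunc_poisson_genpoly K (lam i) (i \in S).
Proof.
rewrite bigA_distr_bigA /=; apply: eq_bigr => g _.
rewrite scaler_prod /box_count; congr (_ *: _).
rewrite (big_morph (fun n => 'X^n : {poly R}) (exprD 'X) (expr0 'X)).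
by rewrite [LHS]big_mkcond; apply: eq_bigr => i _; case: (i \in S).
Qed.

Lemma box_count_pmf_le S s :
  \sum_(g : {ffun I -> 'I_K}) box_prob g * (box_count S g == s)%:R
  <= poisson_weight (lamS lam S) s.
Proof.
have -> : \sum_g box_prob g * (box_count S g == s)%:R =
    (\sum_(g : {ffun I -> 'I_K}) box_prob g *: 'X^(box_count S g))`_s.
  by rewrite coef_sum; apply: eq_bigr => g _; rewrite coefZ coefXn eq_sym.
rewrite box_count_genpolyE /lamS [X in poisson_weight X]big_mkcond /=.
suff /(_ s)[_ //] : poisson_dominated
    (\prod_i trunc_poisson_genpoly K (lam i) (i \in S))
    (\sum_i if i \in S then lam i else 0).
apply: poisson_dominated_prod => i _; split.
  by case: (i \in S) => //; apply: ltW.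
exact: trunc_poisson_genpoly_dominated.
Qed.

Lemma box_expect_le S (phi : nat -> R) : (forall s, 0 <= phi s) ->
  \sum_(g : {ffun I -> 'I_K}) box_prob g * phi (box_count S g) <=
  \sum_(s < (#|I| * K).+1) phi s * poisson_weight (lamS lam S) s.
Proof.
move=> phi_ge0.
have -> : \sum_g box_prob g * phi (box_count S g) =
    \sum_(s < (#|I| * K).+1) phi s *
      \sum_(g : {ffun I -> 'I_K}) box_prob g * (box_count S g == s)%:R.
  under [RHS]eq_bigr do rewrite mulr_sumr.
  rewrite exchange_big /=; apply: eq_bigr => g _.
  have := big_indicator_eq xpredT (fun s : 'I__ => phi s * box_prob g)
                          (Ordinal (box_count_lt S g)).
  rewrite /= mul1r mulrC => <-; apply: eq_bigr => s _.
  by rewrite -val_eqE /=; ring.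
by apply: ler_sum => s _; rewrite ler_wpM2l ?box_count_pmf_le.
Qed.

End TruncatedArrivals.

Lemma sum_eq_Some_le1 (R : numDomainType) (J : finType) (o : option J)
    (T : pred J) :
  \sum_(j | T j) (o == Some j)%:R <= 1 :> R.
Proof.
case: o => [j0|]; last by rewrite big1.
have := big_indicator_eq T (fun _ => 1 : R) j0; under eq_bigr do rewrite mulr1.
by move=> ->; rewrite mulr1; case: (T j0).
Qed.

Section MatchingCounts.
Context {R : realType}.
Variables (I J : finType) (E : I -> J -> bool) (w : I -> J -> R).
Variables (n : {ffun I -> nat}) (M : {ffun online_vertex n -> option J}).

Definition match_count i j : R :=
  \sum_(v : online_vertex n) ((tag v == i) && (M v == Some j))%:R.

Lemma match_count_ge0 i j : 0 <= match_count i j.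
Proof. by apply: sumr_ge0 => v _; rewrite ler0n. Qed.

Lemma sum_online_vertex_tag (P : pred I) :
  \sum_(v : online_vertex n) (P (tag v))%:R = \sum_(i | P i) (n i)%:R :> R.
Proof.
rewrite -(sig_big_dep xpredT (fun _ _ => true) (fun i _ => (P i)%:R)) /=.
rewrite [RHS]big_mkcond; apply: eq_bigr => i _.
by rewrite sumr_const card_ord; case: (P i); rewrite ?mul1rn ?mul0rn.
Qed.

Lemma sum_match_count (P : pred I) j :
  \sum_(i | P i) match_count i j =
  \sum_(v : online_vertex n) (P (tag v) && (M v == Some j))%:R.
Proof.
rewrite exchange_big /=; apply: eq_bigr => v _.
case: (M v == Some j); last by rewrite andbF big1 // => i _; rewrite andbF.
under eq_bigr do rewrite andbT -[(_ == _)%:R]mulr1.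
by rewrite big_indicator_eq andbT mulr1.
Qed.

Lemma matching_weightE :
  matching_weight w M = \sum_i \sum_j w i j * match_count i j.
Proof.
under [RHS]eq_bigr do under eq_bigr do rewrite mulr_sumr.
under [RHS]eq_bigr do rewrite exchange_big /=.
rewrite exchange_big /=; apply: eq_bigr => v _; rewrite exchange_big /=.
case: (M v) => [j0|]; last first.
  by rewrite big1 // => j _; rewrite big1 // => i _; rewrite andbF mulr0.
rewrite (bigD1 j0) //= [X in _ + X]big1 ?addr0 => [|j neq_j].
  under eq_bigr do rewrite eqxx andbT mulrC.
  by rewrite big_indicator_eq mul1r.
rewrite big1 // => i _.
by rewrite (inj_eq Some_inj) [j0 == j]eq_sym (negbTE neq_j) andbF mulr0.
Qed.

Hypothesis M_matching : is_matching E M.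

Lemma matching_inj v v' j : M v = Some j -> M v' = Some j -> v = v'.
Proof.
move: M_matching => /andP[_ /forallP inj_M] Mv Mv'.
by have /forallP/(_ v')/forallP/(_ j) := inj_M v; rewrite Mv Mv' eqxx => /eqP.
Qed.

Lemma matching_edge v j : M v = Some j -> E (tag v) j.
Proof. by move=> Mv; case/andP: M_matching => /forallP/(_ v); rewrite Mv. Qed.

Lemma matching_offline_le1 j :
  \sum_(v : online_vertex n) (M v == Some j)%:R <= 1 :> R.
Proof.
have [v0 /eqP Mv0|unmatched] := pickP (fun v => M v == Some j); last first.
  by rewrite big1 // => v _; rewrite unmatched.
rewrite (bigD1 v0) //= Mv0 eqxx big1 ?addr0 // => v neq_v.
by case: eqP => // /matching_inj/(_ Mv0) eq_v; rewrite eq_v eqxx in neq_v.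
Qed.

Lemma match_count_le_arrivals (P : pred I) (T : pred J) :
  \sum_(i | P i) \sum_(j | T j) match_count i j <= (\sum_(i | P i) n i)%:R.
Proof.
rewrite exchange_big /=; under eq_bigr do rewrite sum_match_count.
rewrite exchange_big /= natr_sum -sum_online_vertex_tag; apply: ler_sum => v _.
by case: (P (tag v)); rewrite /= ?sum_eq_Some_le1 // big1.
Qed.

Lemma match_count_le_card (P : pred I) (T : {set J}) :
  \sum_(i | P i) \sum_(j in T) match_count i j <= #|T|%:R.
Proof.
rewrite exchange_big /=; under eq_bigr do rewrite sum_match_count.
rewrite -sum1_card natr_sum; apply: ler_sum => j _.
apply: le_trans (matching_offline_le1 j); apply: ler_sum => v _.
by case: (P (tag v)).
Qed.

Lemma match_count_nonedge i j : ~~ E i j -> match_count i j = 0.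
Proof.
move=> nEij; rewrite /match_count big1 // => v _.
case: eqP => [tag_v|] //=; case: eqP => [/matching_edge|] //=.
by rewrite tag_v (negbTE nEij).
Qed.

End MatchingCounts.

Section OptimalMatching.
Variables (R : realType) (I J : finType) (E : I -> J -> bool) (w : I -> J -> R).
Variable n : {ffun I -> nat}.

Lemma opt_matching_ge0 : 0 <= opt_matching E w n.
Proof.
rewrite /opt_matching; elim/big_rec: _ => // M x _ x_ge0.
by rewrite le_max x_ge0 orbT.
Qed.

Lemma opt_matching_exists : exists M : {ffun online_vertex n -> option J},
  is_matching E M && (matching_weight w M == opt_matching E w n).
Proof.
apply: (big_ind (fun x => exists M, is_matching E M && (matching_weight w M == x))).
- exists [ffun => None]; apply/andP; split.
    by apply/andP; split; apply/forallP => v;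
      rewrite ?ffunE //; apply/forallP => v'; apply/forallP => j; rewrite !ffunE.
  by rewrite /matching_weight big1 // => v _; rewrite ffunE.
- by move=> x y Mx My; case: lerP.
- by move=> M matchM; exists M; rewrite matchM eqxx.
Qed.

Definition opt_match : {ffun online_vertex n -> option J} :=
  xchoose opt_matching_exists.

Lemma opt_match_is_matching : is_matching E opt_match.
Proof. by case/andP: (xchooseP opt_matching_exists). Qed.

Lemma opt_match_weight : matching_weight w opt_match = opt_matching E w n.
Proof. by case/andP: (xchooseP opt_matching_exists) => _ /eqP. Qed.

End OptimalMatching.

Definition ffun_val (I : finType) (K : nat) (g : {ffun I -> 'I_K}) :
  {ffun I -> nat} := [ffun i => g i : nat].

Lemma box_probE (R : realType) (I : finType) (lam : I -> R) K
    (g : {ffun I -> 'I_K}) :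
  box_prob lam g = \prod_i poisson_pmf (lam i) (ffun_val g i).
Proof. by apply: eq_bigr => i _; rewrite ffunE. Qed.

Lemma box_countE (I : finType) K (S : {set I}) (g : {ffun I -> 'I_K}) :
  box_count S g = \sum_(i in S) ffun_val g i.
Proof. by apply: eq_bigr => i _; rewrite ffunE. Qed.

Lemma sum_le_box_sum (R : numDomainType) (I : finType) (K : nat)
    (f : {ffun I -> nat} -> R) (s : seq {ffun I -> nat}) :
  (forall n, 0 <= f n) -> uniq s ->
  (forall n, n \in s -> forall i, (n i <= K)%N) ->
  \sum_(n <- s) f n <= \sum_(g : {ffun I -> 'I_K.+1}) f (ffun_val g).
Proof.
move=> f_ge0 uniq_s s_le.
rewrite (eq_big_seq (fun n => \sum_(g : {ffun I -> 'I_K.+1})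
                       (ffun_val g == n)%:R * f (ffun_val g))); last first.
  move=> n n_s; pose g0 : {ffun I -> 'I_K.+1} := [ffun i => inord (n i)].
  have val_g0 g : (ffun_val g == n) = (g0 == g).
    rewrite /g0; apply/eqP/eqP => [<-|<-]; apply/ffunP => i; rewrite !ffunE.
      by rewrite inord_val.
    by rewrite inordK // ltnS s_le.
  under eq_bigr do rewrite val_g0.
  rewrite big_indicator_eq mul1r.
  by have /eqP -> : ffun_val g0 == n by rewrite val_g0.
rewrite exchange_big /=; apply: ler_sum => g _.
rewrite -mulr_suml ler_piMl // -natr_sum lern1.
have -> : (\sum_(n <- s) (ffun_val g == n))%N = count_mem (ffun_val g) s.
  by rewrite -sum1_count [RHS]big_mkcond; apply: eq_bigr => n _; rewrite eq_sym.
by rewrite count_uniq_mem //; case: (_ \in s).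
Qed.

Section TruncatedMatchingLP.
Variables (R : realType) (I J : finType) (E : I -> J -> bool) (w : I -> J -> R).
Variables (lam : I -> R) (K : nat).
Hypothesis lam_gt0 : forall i, 0 < lam i.

Definition trunc_match_lp i j : R :=
  \sum_(g : {ffun I -> 'I_K})
    box_prob lam g * match_count (opt_match E w (ffun_val g)) i j.

Lemma sum_trunc_match_lp (P : pred I) (T : pred J) :
  \sum_(i | P i) \sum_(j | T j) trunc_match_lp i j =
  \sum_(g : {ffun I -> 'I_K}) box_prob lam g *
    \sum_(i | P i) \sum_(j | T j) match_count (opt_match E w (ffun_val g)) i j.
Proof.
under eq_bigr do rewrite exchange_big /=.
rewrite exchange_big /=; apply: eq_bigr => g _.
by rewrite mulr_sumr; apply: eq_bigr => i _; rewrite mulr_sumr.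
Qed.

Lemma trunc_match_lp_row_le (S : {set I}) :
  \sum_(i in S) \sum_j trunc_match_lp i j <= lamS lam S.
Proof.
rewrite sum_trunc_match_lp.
apply: le_trans (poisson_weight_partial_mean_le (#|I| * K).+1 (lamS_ge0 lam_gt0 S)).
apply: le_trans (box_expect_le K lam_gt0 S (fun s => ler0n R s)).
apply: ler_sum => g _; rewrite ler_wpM2l ?box_prob_ge0 // box_countE.
exact: match_count_le_arrivals.
Qed.

Lemma trunc_match_lp_block_le (S : {set I}) (T : {set J}) :
  \sum_(i in S) \sum_(j in T) trunc_match_lp i j <=
  \sum_(k < #|T|) (1 - poisson_cdf k (lamS lam S)).
Proof.
rewrite sum_trunc_match_lp.
apply: (@le_trans _ _ (\sum_(g : {ffun I -> 'I_K})
                         box_prob lam g * (minn (box_count S g) #|T|)%:R)).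
  apply: ler_sum => g _; rewrite ler_wpM2l ?box_prob_ge0 // /minn.
  case: ltnP => _; last exact/match_count_le_card/opt_match_is_matching.
  by rewrite box_countE; exact: match_count_le_arrivals.
apply: (le_trans (box_expect_le K lam_gt0 S (fun s => ler0n R (minn s #|T|)))).
rewrite (eq_bigr (fun s : 'I__ =>
  \sum_(k < #|T|) (k < s)%N%:R * poisson_weight (lamS lam S) s)); last first.
  by move=> s _; rewrite natr_minn_sum mulr_suml.
rewrite exchange_big /=; apply: ler_sum => k _.
exact/poisson_weight_partial_tail_le/lamS_ge0.
Qed.

Lemma trunc_match_lp_feasible l : PML_feasible E lam l trunc_match_lp.
Proof.
split; [|split; [|split]].
- move=> i j; apply: sumr_ge0 => g _.
  by rewrite mulr_ge0 ?box_prob_ge0 ?match_count_ge0.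
- move=> i j nEij; rewrite /trunc_match_lp big1 // => g _.
  by rewrite (match_count_nonedge (opt_match_is_matching _ _ _)) ?mulr0.
- move=> i; have := trunc_match_lp_row_le [set i].
  by rewrite big_set1 /lamS big_set1.
case: eqP => _; last by move=> m S T _ <-; apply: trunc_match_lp_block_le.
move=> j; have := trunc_match_lp_block_le [set: I] [set j].
rewrite cards1 big_ord1; under eq_bigl do rewrite inE.
under eq_bigr do rewrite big_set1.
move/le_trans; apply; rewrite gerBl poisson_cdfE.
by apply: sumr_ge0 => s _; apply/poisson_weight_ge0/lamS_ge0.
Qed.

Lemma trunc_match_lp_objective :
  \sum_i \sum_j w i j * trunc_match_lp i j =
  \sum_(g : {ffun I -> 'I_K}) box_prob lam g * opt_matching E w (ffun_val g).
Proof.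
under eq_bigr do under eq_bigr do rewrite mulr_sumr.
under eq_bigr do rewrite exchange_big /=.
rewrite exchange_big /=; apply: eq_bigr => g _.
rewrite -opt_match_weight matching_weightE mulr_sumr; apply: eq_bigr => i _.
by rewrite mulr_sumr; apply: eq_bigr => j _; rewrite mulrCA.
Qed.

End TruncatedMatchingLP.

Theorem mainTheorem7 (R : realType) (I J : finType)
  (E : I -> J -> bool) (w : I -> J -> R) (lam : I -> R)
  (hw : forall i j, E i j -> 0 < w i j)
  (hlam : forall i, 0 < lam i) (l : nat) :
  (expected_opt E w lam <= PML_value E w lam l)%E.
Proof.
pose F (n : {ffun I -> nat}) :=
  \prod_i poisson_pmf (lam i) (n i) * opt_matching E w n.
apply: ge_ereal_sup => _ [X [finX _] <-]; rewrite fsbig_finite //= sumEFin.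
set s := finmap.enum_fset (fset_set X).
pose K := (\max_(n <- s) \max_i n i)%N.
have s_le n : n \in s -> forall i, (n i <= K)%N.
  move=> n_s i; apply: leq_trans (leq_bigmax_seq _ n_s isT).
  exact: (leq_bigmax (F := fun i => n i)).
have F_ge0 n : 0 <= F n.
  rewrite mulr_ge0 ?opt_matching_ge0 //.
  by apply: prodr_ge0 => i _; apply: poisson_pmf_ge0.
apply: le_trans (ereal_sup_ubound _); last first.
  by exists (trunc_match_lp E w lam K.+1); first exact: trunc_match_lp_feasible.
rewrite lee_fin trunc_match_lp_objective.
under [X in _ <= X]eq_bigr do rewrite box_probE.
exact: (sum_le_box_sum F_ge0 (finmap.fset_uniq _) s_le).
Qed.
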